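(* For any $\gamma\ge0$, the function \[ S_\gamma(x)=\hat n_0(x)+\gamma\,m(x),\qquad m(x)=\frac{x^2e^x}{(e^x-1)^2}, \] is a stationary (time-independent) super-solution of the Kompaneets problem.
   Context: $\hat n_0(x)=\frac{x^2}{e^x-1}$. Let $J(x,n)=x^2\partial_xn+(x^2-2x)n+n^2$. A function $n(x,t)$, $C^{2,1}$ for $x,t>0$, with $n_t\to n_0$ in $L^1$ as $t\to0$, such that for $0<s\le t$ the limit $n_t(0)=\lim_{x\to0^+}n_t(x)$ exists and $\lim_{x\to0^+}\int_s^t|x^2\partial_xn_\tau(x)|\,d\tau=0$, is a super-solution of the Kompaneets problem if for all $0<s\le t$: $\partial_tn\ge\partial_xJ(x,n)$ and $\liminf_{x\to\infty}\int_s^tJ(x,n_\tau)\,d\tau\ge0$. *)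

From Stdlib Require Import Reals.
From Coquelicot Require Import Coquelicot.
Open Scope R_scope.

Definition n0hat (x : R) : R := x ^ 2 / (exp x - 1).

Definition mfun (x : R) : R := x ^ 2 * exp x / (exp x - 1) ^ 2.

Definition S (gamma x : R) : R := n0hat x + gamma * mfun x.

(* Functions of (x,t) are written n x t, i.e. n_t(x) = n x t. *)

Definition Jflux (n : R -> R -> R) (t x : R) : R :=
  x ^ 2 * Derive (fun y => n y t) x + (x ^ 2 - 2 * x) * n x t + (n x t) ^ 2.

Definition C21 (n : R -> R -> R) : Prop :=
  forall x t, 0 < x -> 0 < t ->
    ex_derive (fun y => n y t) x /\
    ex_derive (fun y => Derive (fun z => n z t) y) x /\
    ex_derive (fun s => n x s) t /\
    continuous (fun p : R * R => n (fst p) (snd p)) (x, t) /\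
    continuous (fun p : R * R => Derive (fun z => n z (snd p)) (fst p)) (x, t) /\
    continuous (fun p : R * R =>
       Derive (fun y => Derive (fun z => n z (snd p)) y) (fst p)) (x, t) /\
    continuous (fun p : R * R => Derive (fun s => n (fst p) s) (snd p)) (x, t).

(* n_t -> n0 in L^1(0,oo) as t -> 0+ (improper integral over (0,oo)). *)
Definition L1_initial (n : R -> R -> R) (n0 : R -> R) : Prop :=
  exists I : R -> R,
    (forall t, 0 < t ->
       is_RInt_gen (fun x => Rabs (n x t - n0 x))
                   (at_right 0) (Rbar_locally p_infty) (I t)) /\
    filterlim I (at_right 0) (locally 0).

Definition super_solution (n : R -> R -> R) (n0 : R -> R) : Prop :=
  C21 n /\
  L1_initial n n0 /\
  (forall t, 0 < t -> exists l : R, filterlim (fun x => n x t) (at_right 0) (locally l)) /\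
  (forall s t, 0 < s -> s <= t ->
     filterlim (fun x => RInt (fun tau => Rabs (x ^ 2 * Derive (fun y => n y tau) x)) s t)
               (at_right 0) (locally 0)) /\
  (forall x t, 0 < x -> 0 < t ->
     Derive (fun y => Jflux n t y) x <= Derive (fun s => n x s) t) /\
  (* liminf_{x -> oo} int_s^t J(x, n_tau) dtau >= 0 for 0 < s <= t *)
  (forall s t, 0 < s -> s <= t ->
     forall eps : R, 0 < eps ->
       Rbar_locally p_infty (fun x => - eps <= RInt (fun tau => Jflux n tau x) s t)).

(* Write f = 1 / (e^x - 1), so that f' = -(f + f^2), n0hat = x^2 f and
   m = x^2 (f + f^2).  The flux J is quadratic in n, hence
     J(n0hat + g m) = J(n0hat) + g L(m) + g^2 m^2,
   where L is its linearization at n0hat.  Here J(n0hat) = 0 (the Planck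
   distribution is stationary) and L(m) = 0, because m = - d/dmu at mu = 0 of
   the stationary Bose-Einstein family x^2 / (e^(x + mu) - 1).  So
   J(S_g) = g^2 m^2 >= 0, and d_x J(S_g) = 2 g^2 m m' <= 0 = d_t S_g since
   m = ((x/2) / sinh (x/2))^2 is decreasing.  Near 0, x f lies in [1 - x, 1],
   so S_g = g + O(x) and x^2 S_g' = g^2 m^2 - S_g^2 - (x^2 - 2x) S_g = O(x). *)

From Stdlib Require Import Reals Lra Psatz.
From Coquelicot Require Import Coquelicot.
Open Scope R_scope.

Lemma filterlim_at_right_0_linear_bound (g : R -> R) (l C : R) :
  (forall x, 0 < x < 1 -> Rabs (g x - l) <= C * x) ->
  filterlim g (at_right 0) (locally l).
Proof.
  intros Hg. apply filterlim_locally. intros eps.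
  pose proof (Rle_abs C). pose proof (Rabs_pos C).
  set (k := Rabs C + 1).
  assert (Hepsk : eps / k * k = eps) by (unfold k; field; lra).
  assert (Hd : 0 < Rmin 1 (eps / k)).
  { apply Rmin_pos; [lra |].
    apply Rdiv_lt_0_compat; [apply cond_pos | unfold k; lra]. }
  exists (mkposreal _ Hd). intros x Hx Hx0.
  change (Rabs (x - 0) < Rmin 1 (eps / k)) in Hx.
  rewrite Rminus_0_r, Rabs_pos_eq in Hx by lra.
  pose proof (Rmin_l 1 (eps / k)). pose proof (Rmin_r 1 (eps / k)).
  pose proof (Hg x ltac:(lra)).
  change (Rabs (g x - l) < eps). unfold k in *. nra.
Qed.

Lemma C21_stationary (u u1 u2 : R -> R) :
  (forall x, 0 < x -> is_derive u x (u1 x)) ->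
  (forall x, 0 < x -> is_derive u1 x (u2 x)) ->
  (forall x, 0 < x -> continuous u2 x) ->
  C21 (fun x _ => u x).
Proof.
  intros Hu Hu1 Hu2 x t Hx _.
  assert (Du : forall y, 0 < y -> locally y (fun z => Derive u z = u1 z)).
  { intros y Hy. apply (filter_imp (fun z => 0 < z)); [| exact (open_gt 0 y Hy)].
    intros z Hz. apply is_derive_unique, Hu, Hz. }
  assert (DDu : locally x (fun z => Derive (Derive u) z = u2 z)).
  { apply (filter_imp (fun z => 0 < z)); [| exact (open_gt 0 x Hx)].
    intros z Hz. rewrite (Derive_ext_loc _ u1 z (Du z Hz)).
    apply is_derive_unique, Hu1, Hz. }
  assert (Hcomp : forall f : R -> R, continuous f x ->
            continuous (fun p : R * R => f (fst p)) (x, t)).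
  { intros f Hf. apply (continuous_comp fst f); [apply continuous_fst | exact Hf]. }
  assert (Hdc : forall f : R -> R, ex_derive f x -> continuous f x)
    by (intros f; exact (ex_derive_continuous (K := R_AbsRing) (V := R_NormedModule) f x)).
  repeat split.
  - exists (u1 x). apply Hu, Hx.
  - apply (ex_derive_ext_loc u1).
    + apply (filter_imp _ _ (fun z H => eq_sym H) (Du x Hx)).
    + exists (u2 x). apply Hu1, Hx.
  - apply ex_derive_const.
  - apply Hcomp, Hdc. exists (u1 x). apply Hu, Hx.
  - apply Hcomp, (continuous_ext_loc _ u1).
    + apply (filter_imp _ _ (fun z H => eq_sym H) (Du x Hx)).
    + apply Hdc. exists (u2 x). apply Hu1, Hx.
  - apply Hcomp, (continuous_ext_loc _ u2).
    + apply (filter_imp _ _ (fun z H => eq_sym H) DDu).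
    + apply Hu2, Hx.
  - apply (continuous_ext (fun _ => 0)); [intros p; symmetry; apply Derive_const |].
    apply continuous_const.
Qed.

Lemma is_RInt_gen_zero (Fa Fb : (R -> Prop) -> Prop) :
  Filter Fa -> Filter Fb -> is_RInt_gen (fun _ => 0) Fa Fb 0.
Proof.
  intros HFa HFb P HP. unfold filtermapi. apply filter_forall. intros ab.
  exists 0. split; [| apply locally_singleton, HP].
  pose proof (is_RInt_const (fst ab) (snd ab) 0) as H0.
  change (scal _ _) with ((snd ab - fst ab) * 0) in H0. rewrite Rmult_0_r in H0.
  exact H0.
Qed.

Lemma L1_initial_stationary (u : R -> R) : L1_initial (fun x _ => u x) u.
Proof.
  exists (fun _ => 0). split; [| apply filterlim_const].
  intros t _. apply (is_RInt_gen_ext (fun _ => 0)).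
  - apply filter_forall. intros ab y _. rewrite Rminus_diag, Rabs_R0. reflexivity.
  - apply is_RInt_gen_zero; typeclasses eauto.
Qed.

Lemma exp_sub1_pos (x : R) : 0 < x -> 0 < exp x - 1.
Proof. intros Hx. pose proof (exp_ineq1_le x). lra. Qed.

Lemma two_exp_sub1_le (x : R) : 0 <= x -> 2 * (exp x - 1) <= x * (exp x + 1).
Proof.
  intros Hx. destruct (Req_dec x 0) as [-> | Hx0].
  { rewrite exp_0. lra. }
  destruct (MVT_cor2 (fun y => y * (exp y + 1) - 2 * (exp y - 1))
              (fun y => exp y * (y - 1 + exp (- y))) 0 x ltac:(lra))
    as [c [Hc Hcx]].
  { intros c _. apply is_derive_Reals. auto_derive; [easy |].
    rewrite Rmult_plus_distr_l, Rmult_plus_distr_l, <- exp_plus, Rplus_opp_r, exp_0.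
    ring. }
  assert (0 < exp c * (c - 1 + exp (- c))).
  { apply Rmult_lt_0_compat; [apply exp_pos |].
    pose proof (exp_ineq1 (- c) ltac:(lra)). lra. }
  rewrite exp_0 in Hc. nra.
Qed.

Definition bose (x : R) : R := / (exp x - 1).

Lemma bose_pos (x : R) : 0 < x -> 0 < bose x.
Proof. intros Hx. apply Rinv_0_lt_compat, exp_sub1_pos, Hx. Qed.

Lemma x_bose_bounds (x : R) : 0 < x -> 0 < x * bose x <= 1 /\ 1 - x <= x * bose x.
Proof.
  intros Hx. pose proof (exp_sub1_pos x Hx). pose proof (bose_pos x Hx).
  pose proof (exp_ineq1_le x). pose proof (exp_ineq1_le (- x)).
  assert (Hinv : exp x * exp (- x) = 1)
    by (rewrite <- exp_plus, Rplus_opp_r; apply exp_0).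
  assert (Hw : x * bose x * (exp x - 1) = x) by (unfold bose; field; lra).
  repeat split; nra.
Qed.

(* [1 + 2 * bose x = coth (x / 2)] *)
Lemma two_le_x_coth_half (x : R) : 0 < x -> 2 <= x * (1 + 2 * bose x).
Proof.
  intros Hx. pose proof (exp_sub1_pos x Hx). pose proof (bose_pos x Hx).
  pose proof (two_exp_sub1_le x ltac:(lra)).
  replace (x * (1 + 2 * bose x)) with (x * (exp x + 1) * bose x)
    by (unfold bose; field; lra).
  replace 2 with (2 * (exp x - 1) * bose x) at 1 by (unfold bose; field; lra).
  apply Rmult_le_compat_r; lra.
Qed.

Lemma n0hat_bose (x : R) : 0 < x -> n0hat x = x ^ 2 * bose x.
Proof. intros Hx. pose proof (exp_sub1_pos x Hx). unfold n0hat, bose. field. lra. Qed.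

Lemma mfun_bose (x : R) : 0 < x -> mfun x = x ^ 2 * (bose x + bose x ^ 2).
Proof. intros Hx. pose proof (exp_sub1_pos x Hx). unfold mfun, bose. field. lra. Qed.

Lemma n0hat_bounds (x : R) : 0 < x -> 0 <= n0hat x <= x.
Proof.
  intros Hx. destruct (x_bose_bounds x Hx) as [[Hw0 Hw1] _].
  rewrite n0hat_bose by exact Hx.
  replace (x ^ 2 * bose x) with (x * (x * bose x)) by ring. nra.
Qed.

Lemma mfun_nonneg (x : R) : 0 < x -> 0 <= mfun x.
Proof.
  intros Hx. rewrite mfun_bose by exact Hx. pose proof (bose_pos x Hx). nra.
Qed.

Lemma mfun_sub1_bounds (x : R) : 0 < x -> - 2 * x <= mfun x - 1 <= x.
Proof.
  intros Hx. destruct (x_bose_bounds x Hx) as [[Hw0 Hw1] Hw].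
  rewrite mfun_bose by exact Hx.
  set (w := x * bose x) in *.
  replace (x ^ 2 * (bose x + bose x ^ 2) - 1) with (x * w - (1 - w) * (1 + w))
    by (unfold w; ring).
  nra.
Qed.

Definition dn0hat (x : R) : R := 2 * x * bose x - x ^ 2 * (bose x + bose x ^ 2).

Definition dmfun (x : R) : R :=
  x * (bose x + bose x ^ 2) * (2 - x * (1 + 2 * bose x)).

Definition d2n0hat (x : R) : R :=
  2 * bose x - 4 * x * (bose x + bose x ^ 2)
  + x ^ 2 * (1 + 2 * bose x) * (bose x + bose x ^ 2).

Definition d2mfun (x : R) : R :=
  (bose x + bose x ^ 2)
  * (2 - 4 * x * (1 + 2 * bose x)
     + x ^ 2 * (2 * (bose x + bose x ^ 2) + (1 + 2 * bose x) ^ 2)).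

Ltac derive_bose Hx :=
  pose proof (exp_sub1_pos _ Hx); unfold bose;
  auto_derive; [repeat split; intros; nra | field; lra].

Lemma is_derive_n0hat (x : R) : 0 < x -> is_derive n0hat x (dn0hat x).
Proof. intros Hx. unfold n0hat, dn0hat. derive_bose Hx. Qed.

Lemma is_derive_mfun (x : R) : 0 < x -> is_derive mfun x (dmfun x).
Proof. intros Hx. unfold mfun, dmfun. derive_bose Hx. Qed.

Lemma is_derive_dn0hat (x : R) : 0 < x -> is_derive dn0hat x (d2n0hat x).
Proof. intros Hx. unfold dn0hat, d2n0hat. derive_bose Hx. Qed.

Lemma is_derive_dmfun (x : R) : 0 < x -> is_derive dmfun x (d2mfun x).
Proof. intros Hx. unfold dmfun, d2mfun. derive_bose Hx. Qed.

Lemma dmfun_nonpos (x : R) : 0 < x -> dmfun x <= 0.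
Proof.
  intros Hx. pose proof (bose_pos x Hx). pose proof (two_le_x_coth_half x Hx).
  unfold dmfun. assert (0 <= x * (bose x + bose x ^ 2)) by nra. nra.
Qed.

Definition dS (gamma x : R) : R := dn0hat x + gamma * dmfun x.

Definition d2S (gamma x : R) : R := d2n0hat x + gamma * d2mfun x.

Lemma is_derive_S (gamma x : R) : 0 < x -> is_derive (S gamma) x (dS gamma x).
Proof.
  intros Hx. apply (is_derive_plus n0hat (fun y => gamma * mfun y)).
  - apply is_derive_n0hat, Hx.
  - apply is_derive_scal, is_derive_mfun, Hx.
Qed.

Lemma is_derive_dS (gamma x : R) : 0 < x -> is_derive (dS gamma) x (d2S gamma x).
Proof.
  intros Hx. apply (is_derive_plus dn0hat (fun y => gamma * dmfun y)).
  - apply is_derive_dn0hat, Hx.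
  - apply is_derive_scal, is_derive_dmfun, Hx.
Qed.

Lemma continuous_d2S (gamma x : R) : 0 < x -> continuous (d2S gamma) x.
Proof.
  intros Hx. pose proof (exp_sub1_pos x Hx).
  apply (ex_derive_continuous (K := R_AbsRing) (V := R_NormedModule)).
  unfold d2S, d2n0hat, d2mfun, bose. auto_derive. repeat split; intros; nra.
Qed.

Lemma n0hat_flux_eq0 (x : R) : 0 < x ->
  x ^ 2 * dn0hat x + (x ^ 2 - 2 * x) * n0hat x + n0hat x ^ 2 = 0.
Proof. intros Hx. rewrite n0hat_bose by exact Hx. unfold dn0hat. ring. Qed.

Lemma mfun_linearized_flux_eq0 (x : R) : 0 < x ->
  x ^ 2 * dmfun x + (x ^ 2 - 2 * x) * mfun x + 2 * n0hat x * mfun x = 0.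
Proof.
  intros Hx. rewrite n0hat_bose, mfun_bose by exact Hx. unfold dmfun. ring.
Qed.

Lemma Jflux_S (gamma t x : R) : 0 < x ->
  Jflux (fun y _ => S gamma y) t x = (gamma * mfun x) ^ 2.
Proof.
  intros Hx. unfold Jflux.
  replace (Derive (fun y => S gamma y) x) with (dS gamma x)
    by (symmetry; apply is_derive_unique, is_derive_S, Hx).
  unfold S, dS.
  transitivity ((x ^ 2 * dn0hat x + (x ^ 2 - 2 * x) * n0hat x + n0hat x ^ 2)
    + gamma * (x ^ 2 * dmfun x + (x ^ 2 - 2 * x) * mfun x + 2 * n0hat x * mfun x)
    + (gamma * mfun x) ^ 2); [ring |].
  rewrite n0hat_flux_eq0, mfun_linearized_flux_eq0 by exact Hx. ring.
Qed.

Lemma Derive_Jflux_S_nonpos (gamma t x : R) : 0 < x ->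
  Derive (fun y => Jflux (fun z _ => S gamma z) t y) x <= 0.
Proof.
  intros Hx.
  assert (HD : is_derive (fun y => Jflux (fun z _ => S gamma z) t y) x
                 (INR 2 * (gamma * dmfun x) * (gamma * mfun x) ^ 1)).
  { apply (is_derive_ext_loc (fun y => (gamma * mfun y) ^ 2)).
    - apply (filter_imp (fun y => 0 < y)); [| exact (open_gt 0 x Hx)].
      intros y Hy. symmetry. apply Jflux_S, Hy.
    - apply (is_derive_pow (fun y => gamma * mfun y) 2 x).
      apply is_derive_scal, is_derive_mfun, Hx. }
  replace (Derive (fun y => Jflux (fun z _ => S gamma z) t y) x)
    with (INR 2 * (gamma * dmfun x) * (gamma * mfun x) ^ 1)
    by (symmetry; apply is_derive_unique; exact HD).
  pose proof (mfun_nonneg x Hx). pose proof (dmfun_nonpos x Hx).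
  assert (0 <= gamma * gamma) by apply Rle_0_sqr.
  assert (mfun x * dmfun x <= 0) by nra.
  simpl. nra.
Qed.

Lemma S_sub_gamma_bound (gamma x : R) : 0 <= gamma -> 0 < x ->
  Rabs (S gamma x - gamma) <= (1 + 2 * gamma) * x.
Proof.
  intros Hg Hx. pose proof (n0hat_bounds x Hx). pose proof (mfun_sub1_bounds x Hx).
  unfold S. apply Rabs_le. split; nra.
Qed.

Lemma boundary_flux_bound (gamma x : R) : 0 <= gamma -> 0 < x < 1 ->
  Rabs (x ^ 2 * Derive (fun y => S gamma y) x) <= (3 + 8 * gamma) * x.
Proof.
  intros Hg Hx.
  pose proof (Jflux_S gamma 0 x (proj1 Hx)) as HJ. unfold Jflux in HJ.
  pose proof (n0hat_bounds x (proj1 Hx)). pose proof (mfun_sub1_bounds x (proj1 Hx)).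
  pose proof (mfun_nonneg x (proj1 Hx)).
  unfold S in *. set (n := n0hat x) in *. set (m := mfun x) in *.
  set (D := x ^ 2 * Derive (fun y => n0hat y + gamma * mfun y) x) in *.
  assert (HD : D = - (n * (n + 2 * gamma * m)) - (x ^ 2 - 2 * x) * (n + gamma * m))
    by nra.
  assert (0 <= gamma * m <= 2 * gamma) by (split; nra).
  assert (0 <= n * (n + 2 * gamma * m) <= x * (1 + 4 * gamma)).
  { split; [apply Rmult_le_pos |apply Rmult_le_compat]; lra. }
  assert (0 <= (2 * x - x ^ 2) * (n + gamma * m) <= 2 * x * (1 + 2 * gamma)).
  { split; [apply Rmult_le_pos | apply Rmult_le_compat]; nra. }
  rewrite HD. apply Rabs_le. split; nra.
Qed.

Theorem lemma3p6 (gamma : R) (hgamma : 0 <= gamma) :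
  super_solution (fun x _ => S gamma x) (S gamma).
Proof.
  split; [| split; [| split; [| split; [| split]]]].
  - apply (C21_stationary (S gamma) (dS gamma) (d2S gamma)).
    + apply is_derive_S.
    + apply is_derive_dS.
    + apply continuous_d2S.
  - apply L1_initial_stationary.
  - intros t _. exists gamma.
    apply (filterlim_at_right_0_linear_bound _ _ (1 + 2 * gamma)).
    intros x Hx. apply S_sub_gamma_bound; lra.
  - intros s t _ Hst.
    apply (filterlim_at_right_0_linear_bound _ _ ((t - s) * (3 + 8 * gamma))).
    intros x Hx. rewrite RInt_const, Rminus_0_r.
    change (scal _ _) with ((t - s) * Rabs (x ^ 2 * Derive (fun y => S gamma y) x)).
    rewrite Rabs_mult, Rabs_Rabsolu, (Rabs_pos_eq (t - s)), Rmult_assoc by lra.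
    apply Rmult_le_compat_l; [lra |]. apply boundary_flux_bound; assumption.
  - intros x t Hx _. rewrite Derive_const. apply Derive_Jflux_S_nonpos, Hx.
  - intros s t _ Hst eps Heps. exists 0. intros x Hx.
    rewrite (RInt_ext _ (fun _ => (gamma * mfun x) ^ 2))
      by (intros; apply Jflux_S; exact Hx).
    rewrite RInt_const. change (scal _ _) with ((t - s) * (gamma * mfun x) ^ 2).
    pose proof (pow2_ge_0 (gamma * mfun x)). nra.
Qed.
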